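(* Let $a,b,\sigma$ be real numbers with $\sigma>0$, $0<b<1$, $b-1\le a<b$, and $\sigma<1-a+b$. Then every real solution of $$x_{n+1}=ax_n+b(b-a)x_{n-1}+\sigma\tanh(x_n-bx_{n-1}),\quad n\ge0,$$ converges to $0$.
   Context: Solutions are generated by iteration from arbitrary real initial values $x_0,x_{-1}$. *)

From Stdlib Require Import Reals.
Open Scope R_scope.

(* Index shift: y k = x_{k-1}, so y 0 = x_{-1}, y 1 = x_0. *)
Definition is_solution (a b sigma : R) (y : nat -> R) : Prop :=
  forall k : nat,
    y (S (S k)) = a * y (S k) + b * (b - a) * y k + sigma * tanh (y (S k) - b * y k).

From Coquelicot Require Import Coquelicot.
From Stdlib Require Import Reals Lra Psatz.
Open Scope R_scope.

(* Write c = a - b and z_k = y_{k+1} - b y_k.  The recurrence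
   factors: z_{k+1} = c z_k + sigma tanh z_k, a one-dimensional map, and
   y_{k+1} = b y_k + z_k.
   1. On an interval [0, M] one has w / (1 + M) <= tanh w <= w, so on the
      ball |z| <= M the map z |-> c z + sigma tanh z shrinks |z| by the factor
      q = max (c + sigma, -(c + sigma / (1 + M))), which lies in [0, 1) under
      the hypotheses -1 <= c < 0 < sigma < 1 - c.
   2. Taking M = |z_0|, the ball is invariant and |z_n| <= M q^n.
   3. A sequence obeying y_{k+1} = b y_k + z_k with |b| < 1 and geometrically
      small z_k is itself bounded by A r^n for some r < 1, hence tends to 0.
   The file first proves the tanh estimates, then the contraction, the two
   geometric-decay lemmas, and finally the theorem. *)

Lemma tanh_opp (t : R) : tanh (- t) = - tanh t.
Proof.
  unfold tanh, sinh, cosh. rewrite Ropp_involutive.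
  pose proof (exp_pos t). pose proof (exp_pos (- t)).
  field. lra.
Qed.

Lemma cosh_pos (t : R) : 0 < cosh t.
Proof. unfold cosh. pose proof (exp_pos t). pose proof (exp_pos (- t)). lra. Qed.

Lemma sinh_sign (t : R) : 0 <= t * sinh t.
Proof.
  rewrite <- sinh_0 at 1.
  destruct (Rtotal_order 0 t) as [Ht | [<- | Ht]].
  - pose proof (sinh_lt 0 t Ht). rewrite sinh_0 in *. nra.
  - rewrite sinh_0. lra.
  - pose proof (sinh_lt t 0 Ht). rewrite sinh_0 in *. nra.
Qed.

(* sinh t <= t cosh t for t >= 0: the function t cosh t - sinh t vanishes at 0
   and has derivative t sinh t >= 0. *)
Lemma sinh_le_mul_cosh (t : R) : 0 <= t -> sinh t <= t * cosh t.
Proof.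
  intros Ht.
  destruct (Req_dec t 0) as [-> | Ht0].
  { rewrite sinh_0, cosh_0. lra. }
  set (h := fun u => u * cosh u - sinh u).
  assert (Hder : forall c, 0 <= c <= t -> derivable_pt_lim h c (c * sinh c)).
  { intros c _. unfold h.
    replace (c * sinh c) with ((1 * cosh c + c * sinh c) - cosh c) by ring.
    apply derivable_pt_lim_minus; [apply derivable_pt_lim_mult |].
    - apply derivable_pt_lim_id.
    - apply derivable_pt_lim_cosh.
    - apply derivable_pt_lim_sinh. }
  destruct (MVT_cor2 h (fun c => c * sinh c) 0 t ltac:(lra) Hder) as [c [Hmvt _]].
  pose proof (sinh_sign c).
  assert (Hh0 : h 0 = 0) by (unfold h; rewrite sinh_0; ring).
  assert (0 <= h t) by nra.
  unfold h in *. lra.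
Qed.

(* t e^{-t} <= sinh t for t >= 0, from e^t >= 1 + t and e^t e^{-t} = 1. *)
Lemma mul_expN_le_sinh (t : R) : 0 <= t -> t * exp (- t) <= sinh t.
Proof.
  intros Ht.
  assert (Hprod : exp t * exp (- t) = 1)
    by (rewrite <- exp_plus, Rplus_opp_r; apply exp_0).
  pose proof (exp_ineq1_le t). pose proof (exp_pos (- t)).
  assert (exp (- t) <= 1) by nra.
  unfold sinh. nra.
Qed.

Lemma tanh_sandwich (w M : R) :
  0 <= w <= M -> w / (1 + M) <= tanh w /\ tanh w <= w.
Proof.
  intros [Hw HwM].
  pose proof (cosh_pos w).
  assert (Hcosh : cosh w = sinh w + exp (- w)) by (unfold cosh, sinh; lra).
  pose proof (mul_expN_le_sinh w Hw) as Hsinh_low.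
  pose proof (sinh_le_mul_cosh w Hw) as Hsinh_up.
  assert (Hsinh : 0 <= sinh w) by (pose proof (exp_pos (- w)); nra).
  (* w cosh w = w sinh w + w e^{-w} <= M sinh w + sinh w *)
  assert (Hlow : w * cosh w <= (1 + M) * sinh w).
  { rewrite Hcosh.
    assert (w * sinh w <= M * sinh w) by (apply Rmult_le_compat_r; lra).
    lra. }
  unfold tanh. split.
  - apply Rmult_le_reg_r with ((1 + M) * cosh w); [nra |].
    replace (w / (1 + M) * ((1 + M) * cosh w)) with (w * cosh w) by (field; lra).
    replace (sinh w / cosh w * ((1 + M) * cosh w)) with ((1 + M) * sinh w)
      by (field; lra).
    exact Hlow.
  - apply Rmult_le_reg_r with (cosh w); [lra |].
    replace (sinh w / cosh w * cosh w) with (sinh w) by (field; lra).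
    exact Hsinh_up.
Qed.

(* Contraction factor of z |-> c z + s tanh z on the ball of radius M. *)
Definition contraction_factor (c s M : R) : R :=
  Rmax (c + s) (- (c + s / (1 + M))).

Lemma contraction_factor_nonneg (c s M : R) :
  0 <= s -> 0 <= M -> 0 <= contraction_factor c s M.
Proof.
  intros Hs HM. unfold contraction_factor.
  assert (s / (1 + M) <= s).
  { apply Rmult_le_reg_r with (1 + M); [lra |].
    replace (s / (1 + M) * (1 + M)) with s by (field; lra). nra. }
  pose proof (Rmax_l (c + s) (- (c + s / (1 + M)))).
  pose proof (Rmax_r (c + s) (- (c + s / (1 + M)))).
  lra.
Qed.

Lemma contraction_factor_lt_1 (c s M : R) :
  -1 <= c -> 0 < s -> c + s < 1 -> 0 <= M -> contraction_factor c s M < 1.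
Proof.
  intros Hc Hs Hcs HM. unfold contraction_factor.
  assert (0 < s / (1 + M)) by (apply Rdiv_lt_0_compat; lra).
  apply Rmax_lub_lt; lra.
Qed.

Lemma tanh_map_contraction (c s M z : R) :
  0 <= s -> Rabs z <= M ->
  Rabs (c * z + s * tanh z) <= contraction_factor c s M * Rabs z.
Proof.
  intros Hs Hz.
  set (q := contraction_factor c s M).
  assert (Hpos : forall w, 0 <= w <= M -> Rabs (c * w + s * tanh w) <= q * w).
  { intros w Hw.
    destruct (tanh_sandwich w M Hw) as [Hlow Hup].
    assert (Hq1 : c + s <= q) by apply Rmax_l.
    assert (Hq2 : - (c + s / (1 + M)) <= q) by apply Rmax_r.
    assert (s * (w / (1 + M)) <= s * tanh w) by (apply Rmult_le_compat_l; lra).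
    replace (s * (w / (1 + M))) with (s / (1 + M) * w) in * by (field; lra).
    apply Rabs_le. split; nra. }
  destruct (Rle_dec 0 z) as [Hz0 | Hz0].
  - rewrite (Rabs_right z) in * by lra. apply Hpos. lra.
  - rewrite (Rabs_left z) in * by lra.
    replace (c * z + s * tanh z) with (- (c * - z + s * tanh (- z)))
      by (rewrite tanh_opp; ring).
    rewrite Rabs_Ropp. apply Hpos. lra.
Qed.

Lemma contraction_orbit_decay (f : R -> R) (q M : R) (z : nat -> R) :
  0 <= q <= 1 ->
  (forall x, Rabs x <= M -> Rabs (f x) <= q * Rabs x) ->
  (forall k, z (S k) = f (z k)) ->
  Rabs (z 0%nat) <= M ->
  forall n, Rabs (z n) <= M * q ^ n.
Proof.
  intros Hq Hf Hz Hz0.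
  induction n as [| n IH]; simpl; [lra |].
  assert (q ^ n <= 1) by (rewrite <- (pow1 n); apply pow_incr; lra).
  assert (0 <= q ^ n) by (apply pow_le; lra).
  assert (0 <= M) by (eapply Rle_trans; [apply Rabs_pos | exact Hz0]).
  rewrite Hz.
  eapply Rle_trans; [apply Hf; nra |].
  nra.
Qed.

Lemma perturbed_recursion_geometric (b q C : R) (y z : nat -> R) :
  Rabs b < 1 -> 0 <= q < 1 ->
  (forall k, y (S k) = b * y k + z k) ->
  (forall n, Rabs (z n) <= C * q ^ n) ->
  exists A r, 0 <= r < 1 /\ forall n, Rabs (y n) <= A * r ^ n.
Proof.
  intros Hb Hq Hy Hz.
  assert (HC : 0 <= C)
    by (specialize (Hz 0%nat); simpl in Hz; pose proof (Rabs_pos (z 0%nat)); lra).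
  pose proof (Rmax_l (Rabs b) q). pose proof (Rmax_r (Rabs b) q).
  set (m := Rmax (Rabs b) q) in *.
  assert (Hm : m < 1) by (apply Rmax_lub_lt; lra).
  set (r := (1 + m) / 2).
  set (A := Rmax (Rabs (y 0%nat)) (C / (r - Rabs b))).
  assert (HAC : C <= A * (r - Rabs b)).
  { assert (HA : C / (r - Rabs b) <= A) by apply Rmax_r.
    assert (Hgap : 0 <= r - Rabs b) by (unfold r; lra).
    apply (Rmult_le_compat_r (r - Rabs b)) in HA; [| exact Hgap].
    replace (C / (r - Rabs b) * (r - Rabs b)) with C in HA
      by (field; unfold r; lra).
    exact HA. }
  exists A, r. split; [unfold r; pose proof (Rabs_pos b); lra |].
  induction n as [| n IH]; simpl; [rewrite Rmult_1_r; apply Rmax_l |].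
  assert (q ^ n <= r ^ n) by (apply pow_incr; unfold r; lra).
  assert (0 <= r ^ n) by (apply pow_le; unfold r; pose proof (Rabs_pos b); lra).
  pose proof (Hz n).
  rewrite Hy.
  eapply Rle_trans; [apply Rabs_triang |].
  rewrite Rabs_mult.
  assert (Rabs b * Rabs (y n) <= Rabs b * (A * r ^ n))
    by (apply Rmult_le_compat_l; [apply Rabs_pos | exact IH]).
  nra.
Qed.

Lemma geometric_bound_cv (u : nat -> R) (A r : R) :
  0 <= r < 1 -> (forall n, Rabs (u n) <= A * r ^ n) -> Un_cv u 0.
Proof.
  intros Hr Hu.
  apply is_lim_seq_Reals, is_lim_seq_abs_0.
  apply is_lim_seq_le_le with (fun _ => 0) (fun n => A * r ^ n).
  - intro n. split; [apply Rabs_pos | apply Hu].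
  - apply is_lim_seq_const.
  - replace (Finite 0) with (Rbar_mult A 0) by (simpl; f_equal; ring).
    apply is_lim_seq_scal_l, is_lim_seq_geom.
    rewrite Rabs_right; lra.
Qed.

Theorem mainTheorem10 (a b sigma : R) (y : nat -> R)
  (Hsigma : 0 < sigma) (Hb0 : 0 < b) (Hb1 : b < 1)
  (Ha1 : b - 1 <= a) (Ha2 : a < b) (Hs : sigma < 1 - a + b)
  (Hy : is_solution a b sigma y) :
  Un_cv y 0.
Proof.
  set (c := a - b).
  set (z := fun k => y (S k) - b * y k).
  set (M := Rabs (z 0%nat)).
  set (q := contraction_factor c sigma M).
  assert (HM : 0 <= M) by apply Rabs_pos.
  assert (Hz : forall k, z (S k) = c * z k + sigma * tanh (z k))
    by (intro k; unfold z, c; rewrite (Hy k); ring).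
  assert (Hq : 0 <= q < 1).
  { split; [apply contraction_factor_nonneg | apply contraction_factor_lt_1];
      unfold c; lra. }
  assert (Hzdecay : forall n, Rabs (z n) <= M * q ^ n).
  { apply (contraction_orbit_decay (fun x => c * x + sigma * tanh x));
      [lra | | exact Hz | unfold M; lra].
    intros x Hx. apply tanh_map_contraction; lra. }
  destruct (perturbed_recursion_geometric b q M y z) as [A [r [Hr Hyr]]];
    [rewrite Rabs_right; lra | exact Hq | intro k; unfold z; ring | exact Hzdecay |].
  exact (geometric_bound_cv y A r Hr Hyr).
Qed.
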